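(* Let $V=(J,(V_j)_{j\in J},d,H)$ be a hypergraph system, and let $(\nu_e)_{e\in H}$ be a pseudorandom system of measures on $V$. Suppose that for every $e'\subseteq J$ with $|e'|<d$ we are given a $\sigma$-algebra $\mathcal{B}_{e'}\subseteq\mathcal{A}_{e'}$ with $|\mathcal{B}_{e'}|\le M$. Let $e\in H$ and let $E'_e$ be a set in $\bigvee_{e'\subsetneq e}\mathcal{B}_{e'}$. Then for every $f:V_e\to\mathbb{R}$, $$\mathbb{E}\big(1_{E'_e}(x)f(\pi_e(x))\mid x\in V_J\big)=O_M\big(\|f\|_{\Box^e}\big).$$
   Context: A hypergraph system is a quadruple $V=(J,(V_j)_{j\in J},d,H)$ where $J$ is a finite set, each $V_j$ is a finite nonempty set, $d\ge1$ is an integer and $H\subseteq\binom{J}{d}:=\{e\subseteq J:|e|=d\}$. For $e\subseteq J$ put $V_e:=\prod_{j\in e}V_j$, let $\pi_e:V_J\to V_e$ be the coordinate projection and $\mathcal{A}_e:=\{\pi_e^{-1}(E):E\subseteq V_e\}$. $\bigvee$ denotes the smallest $\sigma$-algebra containing the given ones; $|\mathcal{B}|$ is the number of sets in the finite $\sigma$-algebra $\mathcal{B}$. For a finite nonempty set $Z$ and $f:Z\to\mathbb{R}$, $\mathbb{E}(f(x)\mid x\in Z):=|Z|^{-1}\sum_{x\in Z}f(x)$; constraints written after the bar mean uniform averaging over all tuples satisfying them. All objects depend on a parameter $N$ ranging over a sequence tending to infinity while $J,d,H$ are fixed; implicit constants may depend on $J$. $O_y(X)$ denotes a quantity bounded in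 magnitude by $C(y)X$; $o_{N\to\infty}(1)$ a quantity tending to $0$ as $N\to\infty$. Cube notation: for a finite set $e$, $\{0,1\}^e$ is the set of tuples $\omega=(\omega_j)_{j\in e}$ with $\omega_j\in\{0,1\}$, and $0^e$ is the all-zero tuple; for $x^{(0)}_J,x^{(1)}_J\in V_J$, $e\subseteq J$ and $\omega\in\{0,1\}^e$, set $x^{(\omega)}_e:=(x^{(\omega_j)}_j)_{j\in e}\in V_e$ and $x^{(a)}_e:=(x^{(a)}_j)_{j\in e}$ for $a\in\{0,1\}$. The Gowers cube norm of $f:V_e\to\mathbb{R}$ is $\|f\|_{\Box^e}:=\mathbb{E}\big(\prod_{\omega\in\{0,1\}^e}f(x^{(\omega)}_e)\mid x^{(0)}_e,x^{(1)}_e\in V_e\big)^{1/2^{|e|}}$. A system of measures is a family of functions $\nu_e:V_e\to[0,\infty)$, $e\in H$, with $\mathbb{E}(\nu_e(x_e)\mid x_e\in V_e)=1+o_{N\to\infty}(1)$. For $e\in H$ and $f:V_e\to\mathbb{R}$, $\mathcal{D}_ef(x^{(0)}_e):=\mathbb{E}\big(\prod_{\omega\in\{0,1\}^e,\ \omega\neq 0^e}f(x^{(\omega)}_e)\mid x^{(1)}_e\in V_e\big)$. The system is pseudorandom if: (i) $\mathcal{D}_e(\nu_e+1)(x_e)=O(1)$ for all $e\in H$, $x_e\in V_e$; (ii) for every choice of exponents $n_{e,\omega}\in\{0,1\}$, $\mathbb{E}\big(\prod_{e\in H}\prod_{\omega\in\{0,1\}^e}\nu_e(x^{(\omega)}_e)^{n_{e,\omega}}\mid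 x^{(0)}_J,x^{(1)}_J\in V_J\big)=1+o_{N\to\infty}(1)$; (iii) for every $e\in H$, $j\in e$, every choice of $n_{e,\omega}\in\{0,1\}$ and every integer $K\ge0$, $\mathbb{E}\Big(\mathbb{E}\big(\prod_{\omega\in\{0,1\}^e}\nu_e(x^{(\omega)}_e)^{n_{e,\omega}}\mid x^{(0)}_j,x^{(1)}_j\in V_j\big)^K\ \Big|\ x^{(0)}_{e\setminus\{j\}},x^{(1)}_{e\setminus\{j\}}\in V_{e\setminus\{j\}}\Big)=O_K(1)$. *)

From HB Require Import structures.
From mathcomp Require Import all_boot all_order all_algebra.
From mathcomp Require Import reals.
Set Implicit Arguments. Unset Strict Implicit. Unset Printing Implicit Defensive.
Import Order.TTheory GRing.Theory Num.Theory.
Local Open Scope ring_scope.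

(* Coordinates: V_j = 'I_(sz j) (sz j > 0 assumed where needed).           *)
Definition sub (J : finType) (e : {set J}) := {j : J | j \in e}.

Definition VJ (J : finType) (sz : J -> nat) := {dffun forall j : J, 'I_(sz j)}.
Definition Ve (J : finType) (sz : J -> nat) (e : {set J}) :=
  {dffun forall k : sub e, 'I_(sz (val k))}.

Definition proj (J : finType) (sz : J -> nat) (e : {set J}) (x : VJ sz) : Ve sz e :=
  finfun (fun k : sub e => x (val k)).

Definition cube (J : finType) (e : {set J}) := {ffun sub e -> bool}.

Definition mixe (J : finType) (sz : J -> nat) (e : {set J}) (y0 y1 : Ve sz e)
  (w : cube e) : Ve sz e :=
  finfun (fun k : sub e => if w k then y1 k else y0 k).

Definition upd (J : finType) (sz : J -> nat) (e : {set J}) (j : J) (y z : Ve sz e)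
  : Ve sz e :=
  finfun (fun k : sub e => if val k == j then z k else y k).

Definition avg (R : realType) (T : finType) (F : T -> R) : R :=
  (#|T|%:R)^-1 * \sum_(t : T) F t.

(* Gowers box norm; the 2^{|e|}-th root is taken as |e| iterated square roots *)
Definition gowers (R : realType) (J : finType) (sz : J -> nat) (e : {set J})
  (f : Ve sz e -> R) : R :=
  iter #|e| Num.sqrt
    (avg (fun p : Ve sz e * Ve sz e => \prod_(w : cube e) f (mixe p.1 p.2 w))).

Definition Dcal (R : realType) (J : finType) (sz : J -> nat) (e : {set J})
  (f : Ve sz e -> R) (y0 : Ve sz e) : R :=
  avg (fun y1 : Ve sz e =>
         \prod_(w : cube e | w != [ffun => false]) f (mixe y0 y1 w)).

Definition tends_to_one (R : realType) (a : nat -> R) : Prop :=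
  forall eps : R, 0 < eps -> exists N0 : nat, forall n, (N0 <= n)%N -> `|a n - 1| <= eps.

(* system of measures on the sequence of hypergraph systems (indexed by n) *)
Definition system_of_measures (R : realType) (J : finType) (H : {set {set J}})
  (sz : nat -> J -> nat) (nu : forall n (e : {set J}), Ve (sz n) e -> R) : Prop :=
  (forall n e y, e \in H -> 0 <= nu n e y) /\
  (forall e, e \in H -> tends_to_one (fun n => avg (nu n e))).

Definition pseudorandom (R : realType) (J : finType) (H : {set {set J}})
  (sz : nat -> J -> nat) (nu : forall n (e : {set J}), Ve (sz n) e -> R) : Prop :=
  system_of_measures H nu /\
  (exists C : R, forall n e (y : Ve (sz n) e), e \in H ->
      `|Dcal (fun z => nu n e z + 1) y| <= C) /\
  (forall nexp : forall e : {set J}, cube e -> bool,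
      tends_to_one (fun n =>
        avg (fun p : VJ (sz n) * VJ (sz n) =>
          \prod_(e in H) \prod_(w : cube e)
             nu n e (mixe (proj e p.1) (proj e p.2) w) ^+ nexp e w))) /\
  (forall (e : {set J}) (j : J) (nexp : cube e -> bool) (K : nat),
      e \in H -> j \in e ->
      exists C : R, forall n,
        `|avg (fun p : Ve (sz n) e * Ve (sz n) e =>
            (avg (fun q : Ve (sz n) e * Ve (sz n) e =>
               \prod_(w : cube e)
                 nu n e (mixe (upd j p.1 q.1) (upd j p.2 q.2) w) ^+ nexp w)) ^+ K)|
        <= C).

Definition sigma_algebra (T : finType) (S : {set {set T}}) : Prop :=
  set0 \in S /\ (forall A, A \in S -> ~: A \in S) /\
  (forall A B, A \in S -> B \in S -> A :|: B \in S).

Definition generated (T : finType) (G : {set {set T}}) (E : {set T}) : Prop :=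
  forall S, sigma_algebra S -> G \subset S -> E \in S.

Definition in_A (J : finType) (sz : J -> nat) (e : {set J}) (E : {set VJ sz}) : Prop :=
  exists F : {set Ve sz e}, E = [set x | proj e x \in F].

From HB Require Import structures.
From mathcomp Require Import all_boot all_order all_algebra.
From mathcomp Require Import reals.
From mathcomp Require Import ring.
Import Order.TTheory GRing.Theory Num.Theory.
Local Open Scope ring_scope.

(* The sets of [B e'], e' a proper subset of e, generate at most
   2 ^ (2 ^ d * M) atoms, and E' is a union of atoms, so it suffices to bound
   E(1_A(x) f(pi_e x)) for a single atom A.  Each generating set is pulled back
   from some e' != e, hence ignores some coordinate k of e; grouping the factors
   of 1_A accordingly writes it as a product over k in e of functions g_k with
   |g_k| <= 1 and g_k independent of x_k.  After averaging out the coordinates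
   outside e, one Cauchy-Schwarz step per coordinate of e (the generalized von
   Neumann inequality) gives |E(f prod_k g_k)| ^ (2 ^ |e|) <= ||f||_{Box^e} ^ (2 ^ |e|). *)

Section Average.
Context {R : realType}.

Lemma eq_avg (T : finType) (F G : T -> R) : F =1 G -> avg F = avg G.
Proof. by move=> eqFG; rewrite /avg; congr (_ * _); apply: eq_bigr. Qed.

Lemma avgD (T : finType) (F G : T -> R) :
  avg (fun t => F t + G t) = avg F + avg G.
Proof. by rewrite /avg big_split mulrDr. Qed.

Lemma avgZ (T : finType) (c : R) (F : T -> R) :
  avg (fun t => c * F t) = c * avg F.
Proof. by rewrite /avg -mulr_sumr mulrCA. Qed.

Lemma avg_cst (T : finType) (c : R) : (0 < #|T|)%N -> avg (fun _ : T => c) = c.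
Proof.
move=> T_gt0; rewrite /avg sumr_const cardT -cardE -[c *+ _]mulr_natl mulrA mulVf ?mul1r //.
by rewrite pnatr_eq0 -lt0n.
Qed.

Lemma ler_avg (T : finType) (F G : T -> R) : (forall t, F t <= G t) -> avg F <= avg G.
Proof. by move=> leFG; rewrite /avg ler_wpM2l ?invr_ge0 ?ler0n // ler_sum. Qed.

Lemma avg_ge0 (T : finType) (F : T -> R) : (forall t, 0 <= F t) -> 0 <= avg F.
Proof. by move=> F_ge0; rewrite /avg mulr_ge0 ?invr_ge0 ?ler0n ?sumr_ge0. Qed.

Lemma ler_norm_avg (T : finType) (F : T -> R) : `|avg F| <= avg (fun t => `|F t|).
Proof.
rewrite /avg normrM ger0_norm ?invr_ge0 ?ler0n // ler_wpM2l ?invr_ge0 ?ler0n //.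
exact: ler_norm_sum.
Qed.

Lemma avg_pair (A B : finType) (K : A -> B -> R) :
  avg (fun p : A * B => K p.1 p.2) = avg (fun a => avg (fun b => K a b)).
Proof.
rewrite /avg card_prod natrM invfM -mulrA -pair_bigA /= mulr_sumr.
by congr (_ * _); apply: eq_bigr.
Qed.

Lemma exchange_avg (A B : finType) (K : A -> B -> R) :
  avg (fun a => avg (fun b => K a b)) = avg (fun b => avg (fun a => K a b)).
Proof. by rewrite /avg -!mulr_sumr exchange_big /= mulrCA. Qed.

Lemma reindex_avg_inj (T : finType) (h : T -> T) (F : T -> R) :
  injective h -> avg (fun t => F (h t)) = avg F.
Proof. by move=> h_inj; rewrite /avg [in RHS](reindex_inj h_inj). Qed.

Lemma avg_fst (A B : finType) (F : A -> R) : (0 < #|B|)%N ->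
  avg (fun p : A * B => F p.1) = avg F.
Proof.
move=> B_gt0; rewrite (@avg_pair A B (fun a _ => F a)).
by apply: eq_avg => a; rewrite avg_cst.
Qed.

Lemma ler_avg_sqr (T : finType) (F : T -> R) : (0 < #|T|)%N ->
  avg F ^+ 2 <= avg (fun t => F t ^+ 2).
Proof.
move=> T_gt0; set m := avg F.
have : 0 <= avg (fun t => (F t - m) ^+ 2) by apply: avg_ge0 => t; exact: sqr_ge0.
have -> : avg (fun t => (F t - m) ^+ 2) =
    avg (fun t => F t ^+ 2) + (- (2 * m)) * m + m ^+ 2.
  rewrite -(@avg_cst T (m ^+ 2) T_gt0) -/m -avgZ -!avgD.
  by apply: eq_avg => t; ring.
by move=> h; rewrite -subr_ge0; move: h; congr (0 <= _); ring.
Qed.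

Lemma ler_avg_exp2n (T : finType) (F : T -> R) (k : nat) : (0 < #|T|)%N ->
  avg F ^+ (2 ^ k) <= avg (fun t => F t ^+ (2 ^ k)).
Proof.
move=> T_gt0; elim: k F => [|k IHk] F; first by rewrite !expn0 !expr1.
have -> : avg (fun t => F t ^+ (2 ^ k.+1)) = avg (fun t => (F t ^+ 2) ^+ (2 ^ k)).
  by apply: eq_avg => t; rewrite expnS exprM.
rewrite expnS exprM.
apply: le_trans (IHk (fun t => F t ^+ 2)).
rewrite lerXn2r ?nnegrE ?sqr_ge0 ?ler_avg_sqr //.
by apply: avg_ge0 => t; exact: sqr_ge0.
Qed.

Lemma ler_sqr_avg_mul_bounded (T : finType) (g F : T -> R) : (0 < #|T|)%N ->
  (forall t, `|g t| <= 1) -> avg (fun t => g t * F t) ^+ 2 <= avg (fun t => F t ^+ 2).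
Proof.
move=> T_gt0 g_le1; rewrite -real_normK ?num_real //.
apply: (@le_trans _ _ (avg (fun t => `|F t|) ^+ 2)).
  rewrite lerXn2r ?nnegrE ?normr_ge0 ?avg_ge0 //.
  apply: le_trans (ler_norm_avg _ _) _; apply: ler_avg => t.
  by rewrite normrM ler_piMl.
apply: le_trans (@ler_avg_sqr T (fun t => `|F t|) T_gt0) _.
by apply: ler_avg => t; rewrite real_normK ?num_real.
Qed.

End Average.
Section GowersCauchySchwarz.
Context {R : realType} {J : finType} {sz : J -> nat} {e : {set J}}.
Hypothesis V_gt0 : (0 < #|Ve sz e|)%N.
Local Notation V := (Ve sz e).

Lemma updE (k : sub e) (y z : V) k' :
  upd (val k) y z k' = if k' == k then z k' else y k'.
Proof. by rewrite ffunE val_eqE. Qed.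

Lemma updK (k : sub e) (y z z' : V) :
  upd (val k) (upd (val k) y z) z' = upd (val k) y z'.
Proof. by apply/ffunP => k'; rewrite !updE; case: eqP. Qed.

Definition indep_coord (k : sub e) (g : V -> R) :=
  forall y y' : V, (forall k', k' != k -> y k' = y' k') -> g y = g y'.

Lemma indep_coord_upd {k : sub e} {g : V -> R} :
  indep_coord k g -> forall y z, g (upd (val k) y z) = g y.
Proof. by move=> gk y z; apply: gk => k' k'k; rewrite updE (negbTE k'k). Qed.

Definition swap_coord (k : sub e) (p : V * V) : V * V :=
  (upd (val k) p.1 p.2, upd (val k) p.2 p.1).

Lemma swap_coordK (k : sub e) : involutive (swap_coord k).
Proof.
by move=> [y z]; congr (_, _); apply/ffunP => k'; rewrite !updE; case: eqP.
Qed.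

Lemma avg_upd (k : sub e) (F : V -> R) :
  avg (fun p : V * V => F (upd (val k) p.1 p.2)) = avg F.
Proof.
rewrite (@reindex_avg_inj _ _ (swap_coord k) (fun q => F q.1)).
  exact: avg_fst.
exact: inv_inj (swap_coordK k).
Qed.

(* As [g] ignores coordinate [k], [avg (h * g) = avg (g * Phi)] where [Phi]
   averages [h] over that coordinate; Cauchy-Schwarz leaves [avg (Phi ^+ 2)]. *)
Lemma cauchy_schwarz_coord (k : sub e) (h g : V -> R) :
  (forall y, `|g y| <= 1) -> indep_coord k g ->
  avg (fun y => h y * g y) ^+ 2 <=
  avg (fun p : V * V => h p.1 * h (upd (val k) p.1 p.2)).
Proof.
move=> g_le1 gk.
pose Phi y := avg (fun z => h (upd (val k) y z)).
have PhiE y z : Phi (upd (val k) y z) = Phi y.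
  by apply: eq_avg => z'; rewrite updK.
have -> : avg (fun y => h y * g y) = avg (fun y => g y * Phi y).
  rewrite -(avg_upd k).
  rewrite (@avg_pair _ V V (fun y z => h (upd (val k) y z) * g (upd (val k) y z))).
  apply: eq_avg => y; rewrite -avgZ; apply: eq_avg => z.
  by rewrite (indep_coord_upd gk) mulrC.
have -> : avg (fun p : V * V => h p.1 * h (upd (val k) p.1 p.2)) =
          avg (fun y => h y * Phi y).
  rewrite (@avg_pair _ V V (fun y z => h y * h (upd (val k) y z))).
  by under eq_avg do rewrite avgZ.
have -> : avg (fun y => h y * Phi y) = avg (fun y => Phi y ^+ 2).
  rewrite -(avg_upd k (fun y => h y * Phi y)).
  rewrite (@avg_pair _ V V (fun y z => h (upd (val k) y z) * Phi (upd (val k) y z))).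
  apply: eq_avg => y; rewrite expr2 -avgZ; apply: eq_avg => z.
  by rewrite PhiE mulrC.
exact: ler_sqr_avg_mul_bounded.
Qed.

Definition cube_on (S : {set sub e}) (w : cube e) : bool :=
  [forall k, w k ==> (k \in S)].

Definition box (S : {set sub e}) (f : V -> R) : R :=
  avg (fun p : V * V => \prod_(w : cube e | cube_on S w) f (mixe p.1 p.2 w)).

Definition cube_set (j : sub e) (w : cube e) : cube e := [ffun k => (k == j) || w k].
Definition cube_flip (j : sub e) (w : cube e) : cube e :=
  [ffun k => if k == j then ~~ w k else w k].

Lemma cube_flipK j : involutive (cube_flip j).
Proof.
by move=> w; apply/ffunP => k; rewrite !ffunE; case: eqP => // _; rewrite negbK.
Qed.

Lemma cube_on_notin {S : {set sub e}} {j w} : j \notin S -> cube_on S w -> w j = false.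
Proof. by move=> jS /forallP /(_ j); case: (w j) => //= jS'; rewrite jS' in jS. Qed.

Lemma cube_onU1_off {S : {set sub e}} {j} w : j \notin S ->
  cube_on (j |: S) w && ~~ w j = cube_on S w.
Proof.
move=> jS; apply/idP/idP.
  case/andP => /forallP wjS wj; apply/forallP => k; apply/implyP => wk.
  move: (wjS k); rewrite wk /= in_setU1; case/orP => // /eqP kj.
  by move: wk; rewrite kj (negbTE wj).
move=> wS; rewrite (cube_on_notin jS wS) andbT; apply/forallP => k; apply/implyP => wk.
by move/forallP: wS => /(_ k); rewrite wk /= => kS; rewrite in_setU1 kS orbT.
Qed.

Lemma cube_onU1_flip {S : {set sub e}} {j} w : j \notin S ->
  cube_on (j |: S) (cube_flip j w) && cube_flip j w j = cube_on S w.
Proof.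
move=> jS; apply/idP/idP.
  case/andP => /forallP wjS; rewrite ffunE eqxx => wj; apply/forallP => k.
  apply/implyP => wk; move: (wjS k); rewrite ffunE; case: eqP => [kj|kj].
    by move: wk; rewrite kj (negbTE wj).
  by rewrite wk /= in_setU1; case/orP => // /eqP.
move=> wS; rewrite ffunE eqxx (cube_on_notin jS wS) andbT; apply/forallP => k.
apply/implyP; rewrite ffunE in_setU1; case: eqP => //= _ wk.
by move/forallP: wS => /(_ k); rewrite wk.
Qed.

Lemma mixe_cube_set (y0 y1 : V) j w :
  mixe y0 y1 (cube_set j w) = upd (val j) (mixe y0 y1 w) y1.
Proof. by apply/ffunP => k; rewrite updE !ffunE; case: eqP => [->|]. Qed.

Lemma prod_cube_onU1 (S : {set sub e}) j (F : cube e -> R) : j \notin S ->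
  (forall w, cube_on S w -> F (cube_flip j w) = F (cube_set j w)) ->
  \prod_(w | cube_on (j |: S) w) F w =
  \prod_(w | cube_on S w) (F w * F (cube_set j w)).
Proof.
move=> jS Fflip.
rewrite (bigID (fun w : cube e => w j)) /= mulrC big_split /=.
congr (_ * _); first by apply: eq_bigl => w; rewrite cube_onU1_off.
rewrite (reindex_inj (inv_inj (cube_flipK j))) /=.
apply: eq_big => [w|w wS]; first by rewrite cube_onU1_flip.
by apply: Fflip; rewrite -(cube_onU1_flip w jS).
Qed.

Lemma boxU1 {S : {set sub e}} {j} f : j \notin S ->
  avg (fun z : V => box S (fun y => f y * f (upd (val j) y z))) = box (j |: S) f.
Proof.
move=> jS.
pose P y0 y1 z := \prod_(w | cube_on S w)
  (f (mixe y0 y1 w) * f (upd (val j) (mixe y0 y1 w) z)).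
have Pswap y0 y1 z : P y0 (upd (val j) y1 z) (upd (val j) z y1) = P y0 y1 y1.
  apply: eq_bigr => w wS; have wj := cube_on_notin jS wS.
  have -> : mixe y0 (upd (val j) y1 z) w = mixe y0 y1 w.
    by apply/ffunP => k; rewrite !ffunE val_eqE; case: eqP => // ->; rewrite wj.
  by congr (_ * f _); apply/ffunP => k; rewrite !updE; case: eqP => // ->.
transitivity (avg (fun y0 : V => avg (fun y1 : V => P y0 y1 y1))); last first.
  rewrite /box (@avg_pair _ V V (fun y0 y1 =>
    \prod_(w | cube_on (j |: S) w) f (mixe y0 y1 w))).
  apply: eq_avg => y0; apply: eq_avg => y1.
  rewrite prod_cube_onU1 //; last first.
    move=> w wS; congr (f (mixe _ _ _)); apply/ffunP => k; rewrite !ffunE.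
    by case: eqP => // ->; rewrite (cube_on_notin jS wS).
  by apply: eq_bigr => w _; rewrite mixe_cube_set.
transitivity (avg (fun z : V => avg (fun y0 : V => avg (fun y1 : V => P y0 y1 z)))).
  by apply: eq_avg => z; rewrite /box (@avg_pair _ V V (fun y0 y1 => P y0 y1 z)).
rewrite exchange_avg; apply: eq_avg => y0.
rewrite exchange_avg -(@avg_pair _ V V (fun y1 z => P y0 y1 z)).
rewrite -(@reindex_avg_inj _ _ (swap_coord j) _ (inv_inj (swap_coordK j))) /=.
under eq_avg do rewrite Pswap.
exact: (@avg_fst _ V V (fun y1 => P y0 y1 y1)).
Qed.

Lemma box_set0 f : box set0 f = avg f.
Proof.
have cube_on0 w : cube_on set0 w = (w == [ffun => false]).
  apply/forallP/eqP => [w0|-> k]; last by rewrite ffunE.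
  by apply/ffunP => k; rewrite ffunE; move: (w0 k); rewrite inE; case: (w k).
rewrite /box -(@avg_fst _ V V f V_gt0); apply: eq_avg => p.
rewrite (big_pred1 [ffun => false]) => [|w]; last exact: cube_on0.
by congr f; apply/ffunP => k; rewrite !ffunE.
Qed.

Lemma box_setT f : box setT f =
  avg (fun p : V * V => \prod_(w : cube e) f (mixe p.1 p.2 w)).
Proof.
by apply: eq_avg => p; apply: eq_bigl => w; apply/forallP => k; rewrite in_setT implybT.
Qed.

(* Generalized von Neumann inequality: one Cauchy-Schwarz step per coordinate
   of [S] removes the factor [g k] and doubles [f] along coordinate [k]. *)
Lemma avg_prod_indep_le_box (S : {set sub e}) (f : V -> R) (g : sub e -> V -> R) :
  (forall k y, `|g k y| <= 1) -> (forall k, indep_coord k (g k)) ->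
  avg (fun y => f y * \prod_(k in S) g k y) ^+ (2 ^ #|S|) <= box S f.
Proof.
move cardS: #|S| => n; elim: n S f g cardS => [|n IHn] S f g cardS g_le1 gk.
  have -> : S = set0 by apply/eqP; rewrite -cards_eq0 cardS.
  by rewrite box_set0 expn0 expr1; under eq_avg do rewrite big_set0 mulr1.
have [j jS] : exists j, j \in S by apply/set0Pn; rewrite -card_gt0 cardS.
pose S' := S :\ j; have jS' : j \notin S' by rewrite setD11.
have cardS' : #|S'| = n by move: cardS; rewrite (cardsD1 j S) jS add1n => -[].
pose h y := f y * \prod_(k in S') g k y.
pose G z k y := g k y * g k (upd (val j) y z).
pose X z := avg (fun y => (f y * f (upd (val j) y z)) * \prod_(k in S') G z k y).
have -> : avg (fun y => f y * \prod_(k in S) g k y) = avg (fun y => h y * g j y).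
  by apply: eq_avg => y; rewrite (big_setD1 j jS) /= mulrCA mulrC.
have cs := @cauchy_schwarz_coord j h (g j) (g_le1 j) (gk j).
have hX : avg (fun p : V * V => h p.1 * h (upd (val j) p.1 p.2)) = avg X.
  rewrite (@avg_pair _ V V (fun y z => h y * h (upd (val j) y z))) exchange_avg.
  by apply: eq_avg => z; apply: eq_avg => y; rewrite /h /G big_split /=; ring.
rewrite {}hX in cs.
have XS' z : X z ^+ (2 ^ n) <= box S' (fun y => f y * f (upd (val j) y z)).
  apply: IHn => // [k y|k y y' yy'].
    by rewrite normrM mulr_ile1 ?normr_ge0.
  rewrite /G (gk k y y' yy'); congr (_ * _); apply: gk => k' k'k.
  by rewrite !updE; case: eqP => // _; exact: yy'.
rewrite expnS exprM; apply: (@le_trans _ _ (avg X ^+ (2 ^ n))).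
  apply: lerXn2r; rewrite ?nnegrE ?sqr_ge0 //.
  exact: le_trans (sqr_ge0 _) cs.
apply: le_trans (ler_avg_exp2n _ X n V_gt0) _.
have -> : box S f = box (j |: S') f by rewrite /S' setD1K.
by rewrite -(boxU1 f jS'); apply: ler_avg.
Qed.

End GowersCauchySchwarz.

Lemma ler_iter_sqrt {R : realType} (k : nat) (x b : R) : 0 <= x ->
  x ^+ (2 ^ k) <= b -> x <= iter k Num.sqrt b.
Proof.
elim: k x b => [|k IHk] x b x_ge0; first by rewrite expn0 expr1.
rewrite expnS exprM => /(IHk _ _ (sqr_ge0 x)) x2_le.
rewrite /= -(ger0_norm x_ge0) -sqrtr_sqr ler_sqrt //.
exact: le_trans (sqr_ge0 x) x2_le.
Qed.

Lemma gowers_ge0 {R : realType} {J : finType} {sz : J -> nat} {e : {set J}}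
  (f : Ve sz e -> R) : (0 < #|e|)%N -> 0 <= gowers f.
Proof. by rewrite /gowers; case: #|e| => // m _; rewrite iterS sqrtr_ge0. Qed.

Lemma norm_avg_prod_indep_le_gowers {R : realType} {J : finType} {sz : J -> nat}
  {e : {set J}} (f : Ve sz e -> R) (g : sub e -> Ve sz e -> R) :
  (0 < #|Ve sz e|)%N -> (0 < #|e|)%N ->
  (forall k y, `|g k y| <= 1) -> (forall k, indep_coord k (g k)) ->
  `|avg (fun y => f y * \prod_k g k y)| <= gowers f.
Proof.
move=> V_gt0 e_gt0 g_le1 gk.
have card_sub : #|[set: sub e]| = #|e| by rewrite cardsT card_sig; apply: eq_card.
have := avg_prod_indep_le_box V_gt0 [set: sub e] f g g_le1 gk.
rewrite box_setT card_sub => vN; apply: ler_iter_sqrt; first exact: normr_ge0.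
move: vN; under eq_avg do rewrite (eq_bigl _ _ (in_set predT)).
by case: #|e| e_gt0 => // m _; rewrite expnS !exprM real_normK ?num_real.
Qed.

Section Projection.
Context {R : realType} {J : finType} {sz : J -> nat} {e : {set J}}.
Hypothesis sz_gt0 : forall j, (0 < sz j)%N.

Lemma projE (x : VJ sz) (k : sub e) : proj e x k = x (val k).
Proof. exact: ffunE. Qed.

(* [glue x y] agrees with [y] on [e] and with [x] off [e]; the [insubd] only
   serves to transport [y k : 'I_(sz (val k))] to ['I_(sz j)]. *)
Definition glue (x : VJ sz) (y : Ve sz e) : VJ sz :=
  finfun (fun j : J => insubd (x j)
    (if insub j is Some k then val (y k) else val (x j))).

Lemma glue_sub x y (k : sub e) : glue x y (val k) = y k.
Proof. by apply: val_inj; rewrite ffunE valK insubdK //; exact: ltn_ord. Qed.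

Lemma glue_out x y j : j \notin e -> glue x y j = x j.
Proof.
by move=> je; apply: val_inj; rewrite ffunE insubN // insubdK //; exact: ltn_ord.
Qed.

Lemma glue_proj_in x x' j : j \in e -> glue x (proj e x') j = x' j.
Proof. by move=> je; rewrite -[j]/(val (exist _ j je : sub e)) glue_sub projE. Qed.

Definition vj0 : VJ sz := finfun (fun j => Ordinal (sz_gt0 j)).

Lemma card_fiber_proj_le (y y' : Ve sz e) :
  (#|[set x : VJ sz | proj e x == y]| <= #|[set x : VJ sz | proj e x == y']|)%N.
Proof.
rewrite -(@card_in_imset _ _ (glue^~ y')).
  apply: subset_leq_card; apply/subsetP => _ /imsetP [x _ ->].
  by rewrite inE; apply/eqP/ffunP => k; rewrite projE glue_sub.
move=> x1 x2; rewrite !inE => /eqP x1y /eqP x2y x12; apply/ffunP => j.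
have [je|je] := boolP (j \in e); last by rewrite -(glue_out x1 y' j je) x12 glue_out.
have /(congr1 (fun F : Ve sz e => F (exist _ j je))) := etrans x1y (esym x2y).
by rewrite !projE.
Qed.

Lemma avg_proj (Phi : Ve sz e -> R) :
  avg (fun x : VJ sz => Phi (proj e x)) = avg Phi.
Proof.
pose c := #|[set x : VJ sz | proj e x == proj e vj0]|.
have card_fiber y : #|[set x : VJ sz | proj e x == y]| = c.
  by apply/eqP; rewrite eqn_leq !card_fiber_proj_le.
have sum_proj (F : Ve sz e -> R) :
    \sum_(x : VJ sz) F (proj e x) = c%:R * \sum_(y : Ve sz e) F y.
  rewrite (partition_big (proj e) predT) //= mulr_sumr; apply: eq_bigr => y _.
  rewrite (eq_bigr (fun _ => F y)) => [|x /eqP -> //].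
  rewrite sumr_const -(card_fiber y) mulr_natl; congr (_ *+ _).
  by apply: eq_card => x; rewrite inE.
have card_VJ : #|VJ sz| = (c * #|Ve sz e|)%N.
  apply/eqP; rewrite -(eqr_nat R) natrM.
  by have := sum_proj (fun _ => 1); rewrite !sumr_const !cardT -!cardE => ->.
have c_gt0 : (0 < c)%N.
  have : (0 < #|VJ sz|)%N by apply/card_gt0P; exists vj0.
  by rewrite card_VJ muln_gt0 => /andP [].
rewrite /avg sum_proj card_VJ natrM invfM [c%:R^-1 * _]mulrC -mulrA mulKf //.
by rewrite pnatr_eq0 -lt0n.
Qed.

End Projection.

Section Atoms.
Context {R : realType} {T : finType} (G : {set {set T}}).

Definition atom (sg : {set {set T}}) : {set T} :=
  [set x | [forall A in G, (x \in A) == (A \in sg)]].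

Definition saturated (E : {set T}) :=
  forall x x', (forall A, A \in G -> (x \in A) = (x' \in A)) -> (x \in E) = (x' \in E).

Lemma generated_saturated {E : {set T}} : generated G E -> saturated E.
Proof.
pose Sat := [set E : {set T} | [forall x, forall x',
  [forall A in G, (x \in A) == (x' \in A)] ==> ((x \in E) == (x' \in E))]].
have SatP E' : reflect (saturated E') (E' \in Sat).
  rewrite inE; apply: (iffP forallP) => [satE x x' xx'|satE x].
    apply/eqP; move/forallP: (satE x) => /(_ x') /implyP; apply.
    by apply/forall_inP => A AG; rewrite xx'.
  apply/forallP => x'; apply/implyP => /forall_inP xx'.
  by rewrite (satE x x') // => A /xx' /eqP.
move=> /(_ Sat) genE; apply/SatP; apply: genE.
  split; [|split] => [|A|A A'].
  - by apply/SatP => x x' _; rewrite !inE.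
  - move=> /SatP satA; apply/SatP => x x' xx'.
    by rewrite !inE (satA x x').
  - move=> /SatP satA /SatP satA'; apply/SatP => x x' xx'.
    by rewrite !inE (satA x x') ?(satA' x x').
by apply/subsetP => A AG; apply/SatP => x x'; apply.
Qed.

Lemma mem_atom (sg : {set {set T}}) x :
  sg \subset G -> (x \in atom sg) = (sg == [set A in G | x \in A]).
Proof.
move=> sgG; rewrite inE; apply/forall_inP/eqP => [xsg|->]; last first.
  by move=> A AG; rewrite inE AG.
apply/setP => A; rewrite inE; have [AG|AnG] := boolP (A \in G).
  by rewrite (eqP (xsg A AG)).
by apply/negbTE; apply: contra AnG; exact: (subsetP sgG).
Qed.

Lemma atomE (sg : {set {set T}}) x :
  (x \in atom sg)%:R = \prod_(A in G) ((x \in A) == (A \in sg))%:R :> R.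
Proof.
rewrite inE; have [/forall_inP xsg|] := boolP [forall A in G, (x \in A) == (A \in sg)].
  by rewrite big1 // => A /xsg ->.
case/forall_inPn => A AG /negbTE xA.
by rewrite (bigD1 A AG) /= xA mul0r.
Qed.

Lemma indicator_atoms (E : {set T}) : saturated E -> forall x,
  (x \in E)%:R =
  \sum_(sg in powerset G) (atom sg :&: E != set0)%:R * (x \in atom sg)%:R :> R.
Proof.
move=> satE x; set sx := [set A in G | x \in A].
have sxG : sx \in powerset G.
  by rewrite powersetE; apply/subsetP => A; rewrite inE => /andP [].
rewrite (bigD1 sx sxG) big1 /= ?addr0 => [|sg /andP [sgG sg_sx]]; last first.
  by rewrite mem_atom -?powersetE // (negbTE sg_sx) mulr0.
rewrite mem_atom -?powersetE // eqxx mulr1; congr ((nat_of_bool _)%:R).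
apply/idP/set0Pn => [xE|[x' /setIP [x'sx x'E]]].
  by exists x; rewrite inE xE andbT mem_atom -?powersetE.
rewrite (satE x x') // => A AG.
by move: x'sx; rewrite mem_atom -?powersetE // => /eqP /setP /(_ A); rewrite !inE AG.
Qed.

End Atoms.

Section LowerOrderAtoms.
Context {R : realType} {J : finType} {sz : J -> nat} {e : {set J}}.
Hypothesis sz_gt0 : forall j, (0 < sz j)%N.
Variable G : {set {set VJ sz}}.
Hypothesis G_lower : forall A, A \in G -> exists2 e' : {set J}, e' \proper e & in_A e' A.

Local Notation glue0 := (glue (vj0 sz_gt0)).

Lemma mem_glue_proj x A : A \in G -> (x \in A) = (glue0 (proj e x) \in A).
Proof.
move=> /G_lower [e' /properP [e'e _] [F ->]]; rewrite !inE; congr (_ \in F).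
by apply/ffunP => k; rewrite !projE glue_proj_in // (subsetP e'e) ?(valP k).
Qed.

Definition indep_coordb (k : sub e) (A : {set VJ sz}) : bool :=
  [forall y : Ve sz e, forall y' : Ve sz e,
    [forall k', (k' != k) ==> (y k' == y' k')] ==> ((glue0 y \in A) == (glue0 y' \in A))].

(* A set pulled back from [e' \proper e] ignores any coordinate of [e :\: e']. *)
Lemma exists_indep_coordb A : A \in G -> exists k, indep_coordb k A.
Proof.
move=> /G_lower [e' /properP [e'e [j je je']] [F ->]].
exists (exist _ j je); apply/forallP => y; apply/forallP => y'.
apply/implyP => /forallP yy'; rewrite !inE; apply/eqP; congr (_ \in F).
apply/ffunP => k; rewrite !projE.
have ke : val k \in e by rewrite (subsetP e'e) ?(valP k).
rewrite -[val k]/(val (exist _ (val k) ke : sub e)) !glue_sub.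
apply/eqP/(implyP (yy' _)); apply: contraNneq je' => /(congr1 val) /= <-.
exact: valP.
Qed.

Lemma norm_avg_atom_le_gowers (k0 : sub e) sg (f : Ve sz e -> R) :
  `|avg (fun x : VJ sz => (x \in atom G sg)%:R * f (proj e x))| <= gowers f.
Proof.
pose pk A := odflt k0 [pick k | indep_coordb k A].
have pkP A : A \in G -> indep_coordb (pk A) A.
  move=> AG; rewrite /pk; case: pickP => [k //|noK].
  by case: (exists_indep_coordb A AG) => k; rewrite noK.
pose g k (y : Ve sz e) : R :=
  \prod_(A in G | pk A == k) ((glue0 y \in A) == (A \in sg))%:R.
have -> : avg (fun x : VJ sz => (x \in atom G sg)%:R * f (proj e x)) =
          avg (fun x => f (proj e x) * \prod_k g k (proj e x)).
  apply: eq_avg => x; rewrite atomE mulrC; congr (_ * _).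
  rewrite (partition_big pk predT) //=; apply: eq_bigr => k _.
  by apply: eq_bigr => A /andP [AG _]; rewrite -mem_glue_proj.
rewrite (avg_proj sz_gt0 (fun y => f y * \prod_k g k y)).
apply: norm_avg_prod_indep_le_gowers => [||k y|k y y' yy'].
- by apply/card_gt0P; exists (proj e (vj0 sz_gt0)).
- by rewrite card_gt0; apply/set0Pn; exists (val k0); exact: valP.
- rewrite normr_prod; apply: prodr_ile1 => A _.
  by rewrite normr_ge0 /=; case: (_ == _); rewrite ?normr1 ?normr0.
apply: eq_bigr => A /andP [AG /eqP pkA]; congr ((nat_of_bool _)%:R); congr (_ == _).
apply/eqP; have := pkP A AG; rewrite pkA => /forallP /(_ y) /forallP /(_ y') /implyP.
apply; apply/forallP => k'; apply/implyP => k'k; apply/eqP; exact: yy'.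
Qed.

(* Splitting [E] into the at most [2 ^ #|G|] atoms of [G] it contains. *)
Lemma norm_avg_saturated_le_gowers (k0 : sub e) {N : nat} {E : {set VJ sz}}
    (f : Ve sz e -> R) :
  (#|G| <= N)%N -> saturated G E ->
  `|avg (fun x : VJ sz => (x \in E)%:R * f (proj e x))| <= (2 ^ N)%:R * gowers f.
Proof.
move=> GN satE; have e_gt0 : (0 < #|e|)%N.
  by rewrite card_gt0; apply/set0Pn; exists (val k0); exact: valP.
under eq_avg do rewrite (indicator_atoms G E satE) mulr_suml.
rewrite /avg exchange_big mulr_sumr /=.
apply: le_trans (ler_norm_sum _ _ _) _.
apply: le_trans (_ : \sum_(sg in powerset G) gowers f <= _).
  apply: ler_sum => sg _; under eq_bigr do rewrite -mulrA.
  rewrite -mulr_sumr mulrCA normrM -[X in _ <= X]mul1r.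
  rewrite ler_pM ?normr_ge0 ?norm_avg_atom_le_gowers //.
  by case: (_ != _); rewrite ?normr1 ?normr0.
rewrite sumr_const card_powerset -[gowers f *+ _]mulr_natl ler_wpM2r ?gowers_ge0 // ler_nat.
exact: leq_pexp2l.
Qed.

End LowerOrderAtoms.

Lemma card_bigcup_le {I T : finType} (P : pred I) (B : I -> {set T}) :
  (#|\bigcup_(i | P i) B i| <= \sum_(i | P i) #|B i|)%N.
Proof.
elim/big_rec2: _ => [|i n U _ Un]; first by rewrite cards0.
by apply: leq_trans (leq_card_setU _ _).1 _; rewrite leq_add2l.
Qed.

Theorem mainTheorem6 (R : realType) (J : finType) (d : nat) (H : {set {set J}})
  (sz : nat -> J -> nat) (nu : forall n (e : {set J}), Ve (sz n) e -> R) :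
  (1 <= d)%N ->
  (forall e, e \in H -> #|e| = d) ->
  (forall n j, (0 < sz n j)%N) ->
  pseudorandom H nu ->
  forall M : nat, exists C : R,
    forall n (B : {set J} -> {set {set VJ (sz n)}}),
      (forall e' : {set J}, (#|e'| < d)%N ->
         [/\ sigma_algebra (B e'), (forall E, E \in B e' -> in_A e' E)
           & (#|B e'| <= M)%N]) ->
      forall (e : {set J}) (E : {set VJ (sz n)}) (f : Ve (sz n) e -> R),
        e \in H ->
        generated (\bigcup_(e' : {set J} | e' \proper e) B e') E ->
        `|avg (fun x : VJ (sz n) => (x \in E)%:R * f (proj e x))| <= C * gowers f.
Proof.
move=> d_gt0 cardH sz_gt0 _ M; exists (2 ^ (2 ^ d * M))%:R.
move=> n B B_lower e E f eH genE.
have B_proper (e' : {set J}) : e' \proper e -> [/\ sigma_algebra (B e'),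
    (forall A, A \in B e' -> in_A e' A) & (#|B e'| <= M)%N].
  by move=> e'e; apply: B_lower; rewrite -(cardH e eH) proper_card.
have G_lower (A : {set VJ (sz n)}) : A \in \bigcup_(e' : {set J} | e' \proper e) B e' ->
    exists2 e' : {set J}, e' \proper e & in_A e' A.
  by case/bigcupP => e' e'e AB; exists e' => //; case: (B_proper e' e'e) => _ + _; apply.
have cardG : (#|\bigcup_(e' : {set J} | e' \proper e) B e'| <= 2 ^ d * M)%N.
  apply: leq_trans (card_bigcup_le _ _) _.
  apply: (@leq_trans (\sum_(e' : {set J} | e' \proper e) M)).
    by apply: leq_sum => e' e'e; case: (B_proper e' e'e).
  rewrite sum_nat_const leq_mul2r -(cardH e eH) -card_powerset; apply/orP; right.
  by apply: subset_leq_card; apply/subsetP => e' /proper_sub e'e; rewrite powersetE.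
have [j je] : exists j, j \in e by apply/set0Pn; rewrite -card_gt0 cardH.
exact: (norm_avg_saturated_le_gowers (sz_gt0 n) _ G_lower (exist _ j je) f
  cardG (generated_saturated _ genE)).
Qed.
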